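(* For all real $x\ge 1$ and $\sigma>0$, if $X\sim\mathcal{N}_{\mathbb{Z}}(\sigma^2)$ and $Y\sim\mathcal{N}(0,\sigma^2)$ (the continuous Gaussian with mean $0$ and variance $\sigma^2$), then $\Pr[X>x]\le\Pr[Y>\lfloor x\rfloor]$.
   Context: The discrete Gaussian distribution $\mathcal{N}_{\mathbb{Z}}(\sigma^2)$ centered at $0$ is the distribution on $\mathbb{Z}$ with $\Pr[X=x]=e^{-x^2/(2\sigma^2)}/\sum_{u\in\mathbb{Z}}e^{-u^2/(2\sigma^2)}$ for $x\in\mathbb{Z}$. *)

From HB Require Import structures.
From mathcomp Require Import all_boot all_order all_algebra.
From mathcomp Require Import all_classical all_reals all_analysis.
Set Implicit Arguments. Unset Strict Implicit. Unset Printing Implicit Defensive.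
Import Order.TTheory GRing.Theory Num.Theory.
Local Open Scope classical_set_scope.
Local Open Scope ring_scope.

Definition dgauss_weight {R : realType} (sigma : R) (k : int) : R :=
  expR (- (k%:~R) ^+ 2 / (sigma ^+ 2 *+ 2)).

Definition dgauss_prob {R : realType} (sigma : R) (A : set int) : \bar R :=
  ((\esum_(k in A) (dgauss_weight sigma k)%:E) *
   ((fine (\esum_(u in [set: int]) (dgauss_weight sigma u)%:E))^-1)%:E)%E.

From HB Require Import structures.
From mathcomp Require Import all_boot all_order all_algebra.
From mathcomp Require Import all_classical all_reals all_analysis.
From mathcomp Require Import measurable_realfun.
From mathcomp.algebra_tactics Require Import lra.
From mathcomp Require Import zify.
Import Order.TTheory GRing.Theory Num.Theory.
Import numFieldNormedType.Exports.
Local Open Scope classical_set_scope.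
Local Open Scope ring_scope.

(* Let n = floor x, so that X > x iff X > n. Write A and C for the total
   weight rho(k) = exp(-k^2 / (2 sigma^2)) of the integers k > n and k <= n,
   and b = Pr[Y > n], g = Pr[Y <= n] = 1 - b; the claim A / (A + C) <= b then
   amounts to A g <= C b. Cutting both probabilities into the masses of the
   unit intervals (i - 1, i], each side becomes a double series over the pairs
   j <= n < k, and it suffices that
   rho(k) Pr[Y in (j - 1, j]] <= rho(j) Pr[Y in (k - 1, k]].
   Translating (j - 1, j] by k - j, this holds pointwise because
   k^2 + t^2 - j^2 - (t + k - j)^2 = 2 (k - j) (j - t) >= 0 for t <= j. *)

Section integral_shift.
Context {R : realType}.
Local Notation mu := (@lebesgue_measure R).

Lemma integral_itv_shift (f : R -> R) (a b d : R) : a <= b -> continuous f ->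
  (\int[mu]_(t in `[(a + d)%R, (b + d)%R]) (f t)%:E =
   \int[mu]_(t in `[a, b]) (f (t + d))%:E)%E.
Proof.
move=> ab cf.
have shift'E : (shift d : R -> R)^`()%classic = cst 1.
  by apply/funext => t; rewrite derive1E deriveD// derive_id derive_cst addr0.
rewrite (@integration_by_substitution_increasing R (shift d) f a b ab) ?shift'E.
- by apply: eq_integral => t _; rewrite /= mulr1.
- by move=> s t _ _; rewrite ltrD2r.
- by move=> t _; exact: cvg_cst.
- exact: is_cvg_cst.
- exact: is_cvg_cst.
- split; first by move=> t _; exact: derivableD.
  + by apply: cvg_at_right_filter; apply: cvgD; [exact: cvg_id|exact: cvg_cst].
  + by apply: cvg_at_left_filter; apply: cvgD; [exact: cvg_id|exact: cvg_cst].
- by move=> t; exact: continuous_subspaceT.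
Qed.

End integral_shift.

Definition int_gt_enum (n : int) (m : nat) : int := n + m.+1%:Z.
Definition int_le_enum (n : int) (m : nat) : int := n - m%:Z.

Lemma int_gt_enum_inj n : injective (int_gt_enum n).
Proof. by move=> m l; rewrite /int_gt_enum; lia. Qed.

Lemma int_le_enum_inj n : injective (int_le_enum n).
Proof. by move=> m l; rewrite /int_le_enum; lia. Qed.

Lemma range_int_gt_enum n : range (int_gt_enum n) = [set k | n < k].
Proof.
apply/seteqP; split => [_ [m _ <-]|k /= nk]; first by rewrite /= /int_gt_enum; lia.
by exists (absz (k - n - 1)%R) => //; rewrite /int_gt_enum; lia.
Qed.

Lemma range_int_le_enum n : range (int_le_enum n) = [set k | k <= n].
Proof.
apply/seteqP; split => [_ [m _ <-]|k /= kn]; first by rewrite /= /int_le_enum; lia.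
by exists (absz (n - k)%R) => //; rewrite /int_le_enum; lia.
Qed.

Section unit_itv.
Context {R : realType}.

Definition unit_itv (i : int) : set R := `](i%:~R - 1), i%:~R].

Lemma unit_itvE (i : int) (t : R) : unit_itv i t <-> Num.ceil t = i.
Proof.
by rewrite /unit_itv /= in_itv /= -[1]/(1%:~R) -intrB -ceil_eq; split => /eqP.
Qed.

Lemma trivIset_unit_itv (f : nat -> int) : injective f ->
  trivIset setT (unit_itv \o f).
Proof.
move=> finj m l _ _ [t [/= /unit_itvE tm /unit_itvE tl]].
by apply: finj; rewrite -tm -tl.
Qed.

Lemma bigcup_unit_itv (f : nat -> int) :
  \bigcup_(m in setT) unit_itv (f m) = Num.ceil @^-1` range f.
Proof.
apply/seteqP; split => [t [m _ /unit_itvE tm]|t [m _ fm]]; first by exists m.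
by exists m => //; apply/unit_itvE.
Qed.

Variable mu : {measure set (measurableTypeR R) -> \bar R}.

Lemma measure_ceil_preimage (f : nat -> int) : injective f ->
  mu (Num.ceil @^-1` range f) = (\sum_(m <oo) mu (unit_itv (f m)))%E.
Proof.
move=> finj; rewrite -bigcup_unit_itv measure_bigcup //.
- by apply: eq_eseriesl => m; rewrite in_setT.
- by move=> m _; exact: measurable_itv.
- exact: trivIset_unit_itv.
Qed.

Lemma measure_itv_gt_int n :
  mu `](n%:~R : R), +oo[%classic =
  (\sum_(m <oo) mu (unit_itv (int_gt_enum n m)))%E.
Proof.
rewrite -measure_ceil_preimage ?range_int_gt_enum; last exact: int_gt_enum_inj.
by congr (mu _); apply/seteqP; split => t /=; rewrite in_itv /= andbT ceil_gt_int.
Qed.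

Lemma measure_itv_le_int n :
  mu `]-oo, (n%:~R : R)]%classic =
  (\sum_(m <oo) mu (unit_itv (int_le_enum n m)))%E.
Proof.
rewrite -measure_ceil_preimage ?range_int_le_enum; last exact: int_le_enum_inj.
by congr (mu _); apply/seteqP; split => t /=; rewrite in_itv /= ceil_le_int.
Qed.

End unit_itv.

Lemma probability_itv_split {R : realType}
    (P : probability (measurableTypeR R) R) (r : R) :
  (P `]r, +oo[%classic + P `]-oo, r]%classic = 1)%E.
Proof.
by rewrite -setCitvr probability_setC // addeC subeK // fin_num_measure.
Qed.

Lemma esum_range {R : realType} (T : choiceType) (f : nat -> T) (F : T -> \bar R) :
  injective f -> (forall t, 0 <= F t)%E ->
  (\esum_(t in range f) F t = \sum_(m <oo) F (f m))%E.
Proof.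
move=> finj F0; rewrite esum_image; last by move=> m l _ _; exact: finj.
by rewrite nneseries_esumT.
Qed.

Section series_product.
Context {R : realType}.
Local Open Scope ereal_scope.

Lemma nneseries_mul_le (u v : nat -> R) (p q : nat -> \bar R) :
  (forall m, 0 <= u m)%R -> (forall l, 0 <= v l)%R ->
  (forall m, 0 <= p m) -> (forall l, 0 <= q l) ->
  \sum_(m <oo) p m \is a fin_num -> \sum_(l <oo) q l \is a fin_num ->
  (forall m l, (u m)%:E * q l <= (v l)%:E * p m) ->
  (\sum_(m <oo) (u m)%:E) * \sum_(l <oo) q l <=
  (\sum_(l <oo) (v l)%:E) * \sum_(m <oo) p m.
Proof.
move=> u0 v0 p0 q0 pfin qfin uqvp.
have series_mulr (w : nat -> R) (s : nat -> \bar R) : (forall m, 0 <= w m)%R ->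
    (forall l, 0 <= s l) -> \sum_(l <oo) s l \is a fin_num ->
    (\sum_(m <oo) (w m)%:E) * \sum_(l <oo) s l =
    \sum_(m <oo) \sum_(l <oo) (w m)%:E * s l.
  move=> w0 s0 sfin; rewrite -(fineK sfin) muleC -nneseriesZl; last first.
    by move=> m _; rewrite lee_fin.
  by apply: eq_eseriesr => m _; rewrite muleC fineK // nneseriesZl.
rewrite !series_mulr // nneseries_interchange; last first.
  by move=> l m; rewrite mule_ge0 // lee_fin.
apply: lee_nneseries => [m _ _|m _].
  by apply: nneseries_ge0 => l _; rewrite mule_ge0 // lee_fin.
apply: lee_nneseries => [l _ _|l _]; last exact: uqvp.
by rewrite mule_ge0 // lee_fin.
Qed.

End series_product.

Lemma ratio_le_of_cross_le {R : realType} {a c b g : \bar R} :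
  (a * g <= c * b)%E -> (b + g = 1)%E ->
  (0 <= a)%E -> (0 <= c)%E -> (0 <= b)%E -> b \is a fin_num -> g \is a fin_num ->
  (a * ((fine (a + c))^-1)%:E <= b)%E.
Proof.
move=> agcb bg1 a0 c0 b0 bfin gfin.
have [acfin|] := boolP (a + c \is a fin_num)%E; last first.
  move/fin_numPn => [acNy|->]; last by rewrite /= invr0 mule0.
  by have := adde_ge0 a0 c0; rewrite acNy.
move: acfin; rewrite fin_numD => /andP[afin cfin].
move: bg1 a0 c0 b0 agcb.
rewrite -(fineK afin) -(fineK cfin) -(fineK bfin) -(fineK gfin) -!EFinM -EFinD.
move=> /(congr1 fine) /= bg1; rewrite !lee_fin => a0 c0 b0 agcb.
have [->|ac_neq0] := eqVneq (fine a + fine c) 0; first by rewrite invr0 mulr0.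
rewrite ler_pdivrMr; last by rewrite lt_neqAle eq_sym ac_neq0 addr_ge0.
nra.
Qed.

Lemma normal_fun_mul_shift_le {R : realType} (s j k t : R) : t <= j -> j <= k ->
  normal_fun 0 s k * normal_fun 0 s t <=
  normal_fun 0 s j * normal_fun 0 s (t + (k - j)).
Proof.
move=> tj jk; rewrite /normal_fun !subr0 -!expRD ler_expR -!mulNr -!mulrDl.
rewrite ler_wpM2r ?invr_ge0 ?mulrn_wge0 ?sqr_ge0 //.
nra.
Qed.

Lemma dgauss_weightE {R : realType} (s : R) k :
  dgauss_weight s k = normal_fun 0 s k%:~R.
Proof. by rewrite /normal_fun subr0. Qed.

Section dgauss_tail.
Context {R : realType} (sigma : R).
Hypothesis sigma_gt0 : 0 < sigma.
Local Notation P := (normal_prob 0 sigma).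
Local Notation rho := (dgauss_weight sigma).

Let normal_pdf_peakE t :
  normal_pdf 0 sigma t = normal_peak sigma * normal_fun 0 sigma t.
Proof. by rewrite normal_pdfE ?gt_eqF. Qed.

Let continuous_normal_pdf_shift d :
  continuous (fun t => normal_pdf 0 sigma (t + d)).
Proof.
move=> t; apply: (@continuous_comp _ _ _ (+%R^~ d)).
  by apply: cvgD; [exact: cvg_id|exact: cvg_cst].
by apply: continuous_normal_pdf; rewrite gt_eqF.
Qed.

Let measurable_EFin_normal_pdf_shift (A : set R) d :
  measurable_fun A (fun t : R => (normal_pdf 0 sigma (t + d))%:E).
Proof.
apply/measurable_funTS/measurable_EFinP.
exact: continuous_measurable_fun (continuous_normal_pdf_shift d).
Qed.

Let measurable_EFin_normal_pdf (A : set R) :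
  measurable_fun A (fun t : R => (normal_pdf 0 sigma t)%:E).
Proof.
by apply/measurable_funTS/measurable_EFinP; exact: measurable_normal_pdf.
Qed.

Lemma dgauss_weight_mul_unit_itv_le j k : j <= k ->
  ((rho k)%:E * P (unit_itv j) <= (rho j)%:E * P (unit_itv k))%E.
Proof.
move=> jk.
rewrite /normal_prob /unit_itv !integral_itv_obnd_cbnd //.
rewrite (_ : k%:~R = j%:~R + (k - j)%:~R :> R); last by rewrite intrB addrC subrK.
rewrite (_ : j%:~R + _ - 1 = j%:~R - 1 + (k - j)%:~R :> R); last by rewrite addrAC.
rewrite integral_itv_shift ?gerBl //; last first.
  by apply: continuous_normal_pdf; rewrite gt_eqF.
rewrite -!ge0_integralZl_EFin ?expR_ge0 //; last 4 first.
- by move=> t _; rewrite lee_fin normal_pdf_ge0.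
- exact: measurable_EFin_normal_pdf_shift.
- by move=> t _; rewrite lee_fin normal_pdf_ge0.
- exact: measurable_EFin_normal_pdf.
apply: ge0_le_integral => //.
- by move=> t _; rewrite lee_fin mulr_ge0 ?expR_ge0 ?normal_pdf_ge0.
- by apply: measurable_funeM; exact: measurable_EFin_normal_pdf.
- by apply: measurable_funeM; exact: measurable_EFin_normal_pdf_shift.
move=> t; rewrite /= in_itv /= => /andP[_ tj].
rewrite lee_fin !normal_pdf_peakE mulrCA [X in _ <= X]mulrCA.
rewrite ler_wpM2l ?normal_peak_ge0 // !dgauss_weightE intrB.
by apply: normal_fun_mul_shift_le; rewrite ?ler_int.
Qed.

Lemma dgauss_weight_normal_prob_cross_le n :
  ((\sum_(m <oo) (rho (int_gt_enum n m))%:E) * P `]-oo, n%:~R] <=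
   (\sum_(l <oo) (rho (int_le_enum n l))%:E) * P `]n%:~R, +oo[)%E.
Proof.
have Pfin A : measurable A -> P A \is a fin_num by move=> mA; exact: fin_num_measure.
rewrite measure_itv_gt_int measure_itv_le_int.
apply: nneseries_mul_le => [m|l|m|l|||m l]; rewrite ?expR_ge0 ?measure_ge0 //.
- by rewrite -measure_itv_gt_int Pfin.
- by rewrite -measure_itv_le_int Pfin.
- by apply: dgauss_weight_mul_unit_itv_le; rewrite /int_gt_enum /int_le_enum; lia.
Qed.

End dgauss_tail.

Lemma dgauss_probE {R : realType} (sigma : R) (A : set int) :
  dgauss_prob sigma A = ((\esum_(k in A) (dgauss_weight sigma k)%:E) *
    ((fine (\esum_(k in A) (dgauss_weight sigma k)%:E +
            \esum_(k in ~` A) (dgauss_weight sigma k)%:E))^-1)%:E)%E.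
Proof.
rewrite /dgauss_prob (esumID A setT) ?setTI // => k _.
by rewrite lee_fin expR_ge0.
Qed.

Theorem mainTheorem5 (R : realType) (x sigma : R) :
  1 <= x -> 0 < sigma ->
  (dgauss_prob sigma [set k : int | (x < k%:~R)%R]
   <= normal_prob 0 sigma `](Num.floor x)%:~R, +oo[)%E.
Proof.
move=> _ sigma_gt0; set n := Num.floor x.
have gtE : [set k : int | x < k%:~R] = range (int_gt_enum n).
  by rewrite range_int_gt_enum; apply/seteqP; split => k /=; rewrite floor_lt_int.
have leE : ~` range (int_gt_enum n) = range (int_le_enum n).
  rewrite range_int_gt_enum range_int_le_enum.
  by apply/seteqP; split => k /=; rewrite leNgt => /negP.
have w_ge0 k : (0 <= (dgauss_weight sigma k)%:E)%E by rewrite lee_fin expR_ge0.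
rewrite dgauss_probE gtE leE !esum_range //;
  [|exact: int_le_enum_inj|exact: int_gt_enum_inj].
apply: (ratio_le_of_cross_le (dgauss_weight_normal_prob_cross_le _ sigma_gt0 n)
                               (probability_itv_split _ _)).
- by apply: nneseries_ge0 => m _ _; exact: w_ge0.
- by apply: nneseries_ge0 => m _ _; exact: w_ge0.
- exact: measure_ge0.
- exact: fin_num_measure.
- exact: fin_num_measure.
Qed.
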